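(* Let $\alpha,l,L,k>0$ with $L>l$. For $n\in\{1,2,3,\dots\}$ let $x_n=-\frac{\pi}{2\alpha l}+n\frac{\pi}{\alpha l}$, and let $D=[0,+\infty)\setminus\{x_n: n\ge 1\}$. Define $f:D\to\mathbb{R}$ by $$f(x)=\arctan\!\left(\frac{\tan(\alpha l x)}{k\alpha}\right)+(L-l)x .$$ Then $(0,+\infty)\subseteq f(D)$, i.e. every positive real number is a value of $f$.
   Context: $\arctan$ denotes the principal branch with values in $(-\pi/2,\pi/2)$. *)

From Stdlib Require Import Reals.
Open Scope R_scope.

Definition xn (alpha l : R) (n : nat) : R :=
  - PI / (2 * alpha * l) + INR n * PI / (alpha * l).

Definition D_lem2 (alpha l : R) (x : R) : Prop :=
  0 <= x /\ forall n : nat, (1 <= n)%nat -> x <> xn alpha l n.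

Definition f_lem2 (alpha l L k : R) (x : R) : R :=
  atan (tan (alpha * l * x) / (k * alpha)) + (L - l) * x.

(* In the variable t = alpha l x we have f x = atan (tan t / K) + m t with
   K = k alpha and m = (L - l) / (alpha l).  Shifting t by n PI only adds
   n m PI, because tan has period PI.  On the central branch (-PI/2, PI/2) the
   continuous odd function atan (tan s / K) + m s takes every value of
   [-m PI/2, m PI/2], by the intermediate value theorem, and these intervals
   shifted by n m PI cover [0, +oo).  Poles x_n lie exactly between branches. *)

From Stdlib Require Import Reals Lra Lia.
From Coquelicot Require Import Coquelicot.
Open Scope R_scope.

Lemma tan_le u v : -PI/2 < u -> u <= v -> v < PI/2 -> tan u <= tan v.
Proof.
intros Hu Huv Hv; destruct (Rle_lt_or_eq_dec _ _ Huv) as [Hlt|<-]; [|lra].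
left; apply tan_increasing; lra.
Qed.

Lemma atan_le u v : u <= v -> atan u <= atan v.
Proof.
intros Huv; destruct (Rle_lt_or_eq_dec _ _ Huv) as [Hlt|<-]; [|lra].
left; apply atan_increasing; lra.
Qed.

Lemma tan_add_INR_PI n t : tan (INR n * PI + t) = tan t.
Proof.
induction n as [|n IH].
- simpl; f_equal; ring.
- rewrite S_INR, <- IH.
  replace ((INR n + 1) * PI + t) with ((INR n * PI + t) + PI) by ring.
  unfold tan; rewrite neg_sin, neg_cos; unfold Rdiv; rewrite Rinv_opp; ring.
Qed.

Lemma IVT_interv_le (f : R -> R) a b y :
  (forall t, a <= t <= b -> continuity_pt f t) -> a <= b -> f a <= y <= f b ->
  exists t, a <= t <= b /\ f t = y.
Proof.
intros Hf Hab [Hay Hyb].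
destruct (Rle_lt_or_eq_dec _ _ Hay) as [Hay'|<-]; [|exists a; split; lra].
destruct (Rle_lt_or_eq_dec _ _ Hyb) as [Hyb'|Hyb']; [|exists b; split; lra].
destruct (Ranalysis5.IVT_interv (fun t => f t - y) a b) as [t [Ht Hft]].
- intros s Hs; apply continuity_pt_minus; [exact (Hf s Hs) | apply continuity_pt_const; intros ? ?; reflexivity].
- destruct (Rle_lt_or_eq_dec _ _ Hab) as [|<-]; lra.
- lra.
- lra.
- exists t; split; [exact Ht | lra].
Qed.

Lemma INR_PI_add_neq_pole n j t :
  -PI/2 < t < PI/2 -> INR n * PI + t <> INR j * PI - PI/2.
Proof.
intros Ht E.
assert (HPI := PI_RGT_0).
assert (Hlo : 0 < INR j - INR n) by nra.
assert (Hhi : INR j - INR n < 1) by nra.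
assert (Hnj : (n < j)%nat) by (apply INR_lt; lra).
assert (Hjn : (j < S n)%nat) by (apply INR_lt; rewrite S_INR; lra).
lia.
Qed.

Section Branch.

Variables K m : R.

Definition branch (t : R) : R := atan (tan t / K) + m * t.

Lemma branch_0 : branch 0 = 0.
Proof. unfold branch; rewrite tan_0, Rdiv_0_l, atan_0; ring. Qed.

Lemma branch_opp t : branch (- t) = - branch t.
Proof. unfold branch; rewrite tan_neg, Rdiv_opp_l, atan_opp; ring. Qed.

Lemma branch_add_INR_PI n t : branch (INR n * PI + t) = branch t + INR n * (m * PI).
Proof. unfold branch; rewrite tan_add_INR_PI; ring. Qed.

Lemma branch_continuous t : -PI/2 < t < PI/2 -> continuity_pt branch t.
Proof.
intros Ht; apply continuity_pt_filterlim.
assert (Hder : ex_derive branch t).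
{ unfold branch; auto_derive; apply ex_derive_Reals_1, derivable_pt_tan; lra. }
exact (@ex_derive_continuous R_AbsRing R_NormedModule _ _ Hder).
Qed.

Hypothesis HK : 0 < K.
Hypothesis Hm : 0 < m.

Lemma branch_ge b : atan K <= b < PI/2 -> PI/4 + m * b <= branch b.
Proof.
intros Hb; unfold branch.
assert (HatK := atan_bound K).
assert (HtanK : K <= tan b) by (rewrite <- (tan_atan K) at 1; apply tan_le; lra).
assert (Hratio : 1 <= tan b / K) by (apply Rle_div_r; lra).
apply atan_le in Hratio; rewrite atan_1 in Hratio; lra.
Qed.

Lemma branch_surj_nonneg d :
  0 <= d <= m * PI / 2 -> exists t, 0 <= t < PI/2 /\ branch t = d.
Proof.
intros Hd.
assert (HPI := PI_RGT_0).
assert (HatK := atan_bound K).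
assert (HatK0 : 0 < atan K) by (rewrite <- atan_0; apply atan_increasing; lra).
set (b := Rmax (atan K) ((d - PI/4) / m)).
assert (Hb1 : atan K <= b) by apply Rmax_l.
assert (Hb2 : (d - PI/4) / m <= b) by apply Rmax_r.
assert (Hb3 : b < PI/2).
{ apply Rmax_lub_lt; [lra|]. apply Rlt_div_l; lra. }
assert (Hd_le : d <= branch b).
{ assert (Hmb : d - PI/4 <= m * b) by (apply Rle_div_l in Hb2; lra).
  pose proof (branch_ge b). lra. }
destruct (IVT_interv_le branch 0 b d) as [t [Ht Hbt]].
- intros s Hs; apply branch_continuous; lra.
- lra.
- rewrite branch_0; lra.
- exists t; split; [lra | exact Hbt].
Qed.

Lemma branch_surj d :
  - (m * PI / 2) <= d <= m * PI / 2 ->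
  exists t, -PI/2 < t < PI/2 /\ (0 <= d -> 0 <= t) /\ branch t = d.
Proof.
intros Hd; destruct (Rle_or_lt 0 d) as [Hd0|Hd0].
- destruct (branch_surj_nonneg d) as [t [Ht Hbt]]; [lra|].
  exists t; split; [lra | split; [lra | exact Hbt]].
- destruct (branch_surj_nonneg (- d)) as [t [Ht Hbt]]; [lra|].
  exists (- t); split; [lra | split; [lra|]].
  rewrite branch_opp, Hbt; ring.
Qed.

End Branch.

Lemma f_lem2_scaled alpha l L k s : alpha <> 0 -> l <> 0 ->
  f_lem2 alpha l L k (s / (alpha * l)) = branch (k * alpha) ((L - l) / (alpha * l)) s.
Proof.
intros Ha Hl; unfold f_lem2, branch.
replace (alpha * l * (s / (alpha * l))) with s by (field; auto).
f_equal; field; auto.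
Qed.

Lemma D_lem2_scaled alpha l s : 0 < alpha -> 0 < l -> 0 <= s ->
  (forall j, s <> INR j * PI - PI/2) -> D_lem2 alpha l (s / (alpha * l)).
Proof.
intros Ha Hl Hs Hpole; split.
- apply Rdiv_le_0_compat; nra.
- intros j _ E; apply (Hpole j).
  apply (f_equal (fun x => x * (alpha * l))) in E; unfold xn in E.
  replace (s / (alpha * l) * (alpha * l)) with s in E by (field; lra).
  rewrite E; field; lra.
Qed.

Theorem lemma2 (alpha l L k : R) :
  0 < alpha -> 0 < l -> 0 < L -> 0 < k -> l < L ->
  forall y : R, 0 < y -> exists x : R, D_lem2 alpha l x /\ f_lem2 alpha l L k x = y.
Proof.
intros Ha Hl _ Hk HlL y Hy.
assert (HPI := PI_RGT_0).
assert (Hc : 0 < alpha * l) by nra.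
set (m := (L - l) / (alpha * l)).
assert (Hm : 0 < m) by (apply Rdiv_lt_0_compat; lra).
assert (HmPI : 0 < m * PI) by nra.
destruct (nfloor_ex (y / (m * PI) + / 2)) as [n Hn].
{ assert (0 < y / (m * PI)) by (apply Rdiv_lt_0_compat; lra). lra. }
set (d := y - INR n * (m * PI)).
assert (Hd : - (m * PI / 2) <= d <= m * PI / 2).
{ assert (Hy_eq : y = y / (m * PI) * (m * PI)) by (field; lra).
  unfold d; split; nra. }
destruct (branch_surj (k * alpha) m (Rmult_lt_0_compat _ _ Hk Ha) Hm d Hd)
  as [t [Ht [Hsign Hbt]]].
exists ((INR n * PI + t) / (alpha * l)); split.
- apply D_lem2_scaled; [exact Ha | exact Hl | | intros j; apply INR_PI_add_neq_pole; lra].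
  destruct (Rle_or_lt 0 d) as [Hd0|Hd0].
  + pose proof (pos_INR n); specialize (Hsign Hd0); nra.
  + assert (Hn1 : 1 <= INR n).
    { apply (le_INR 1), INR_lt; simpl; unfold d in Hd0; nra. }
    nra.
- rewrite f_lem2_scaled by lra; fold m.
  rewrite branch_add_INR_PI, Hbt; unfold d; ring.
Qed.
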